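(* Let $k$ be a field, $\Gamma=(V,E)$ a finite connected quiver, $I\subseteq R^2$ a two-sided ideal of $k\Gamma$, and $\mathscr{Q}$ a fixed basis of $k\Gamma/I$ as in the context. Then $\mathfrak{B}=\mathfrak{B}_1\cup\mathfrak{B}_2$ is a $k$-basis of the space $\mathrm{Diff}(k\Gamma,k\Gamma/I)$ of differential operators from $k\Gamma$ to $k\Gamma/I$, where $\mathfrak{B}_1=\{D_{\overline{s}}\mid\overline{s}\in\mathscr{Q}_A\}$ and $\mathfrak{B}_2=\{D_{r,\overline{s}}\mid r\in E,\ \overline{s}\in\mathscr{Q},\ r\parallel\overline{s}\}$.
   Context: For a path $p$, $t(p),h(p)$ are its start and end vertex (vertices are trivial paths); paths multiply by left-to-right concatenation (product $0$ if they do not concatenate). $R$ is the ideal generated by $E$, $\overline{x}=x+I$. A differential operator from $k\Gamma$ to $k\Gamma/I$ is a $k$-linear map $D$ with $D(xy)=D(x)\overline{y}+\overline{x}D(y)$. $\mathscr{Q}$ is a fixed $k$-basis of $k\Gamma/I$ consisting of residue classes of paths and containing $\overline{v}$ ($v\in V$) and $\overline{e}$ ($e\in E$); for $\overline{q}\in\mathscr{Q}$, $t(\overline{q}),h(\overline{q})$ are the start/end vertex of any representing path (well defined), and $r\parallel\overline{s}$ means $t(r)=t(\overline{s})$, $h(r)=h(\overline{s})$. $\mathscr{Q}_A=\{\overline{q}\in\mathscr{Q}\mid t(\overline{q})\neq h(\overline{q})\}$. For $m\in k\Gamma/I$, $D_m$ is the inner differential operator $x\mapsto m\overline{x}-\overline{x}m$.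 For $r\in E$ and $\overline{s}\in\mathscr{Q}$ with $r\parallel\overline{s}$, $D_{r,\overline{s}}$ is the unique differential operator $k\Gamma\to k\Gamma/I$ with $D_{r,\overline{s}}(r)=\overline{s}$ and $D_{r,\overline{s}}(x)=0$ for all $x\in (E\setminus\{r\})\cup V$. *)

From HB Require Import structures.
From mathcomp Require Import all_boot all_order all_algebra.
From mathcomp Require Import finmap monalg.
Set Implicit Arguments. Unset Strict Implicit. Unset Printing Implicit Defensive.
Import GRing.Theory.
Local Open Scope ring_scope.

Section Quiver.
Variables (V E : finType) (src tgt : E -> V).

(* Raw path: (start vertex, list of arrows).  It is a valid path if the
   arrows concatenate (left to right) and the first arrow starts at the
   recorded start vertex. Trivial paths = (v, [::]). *)
Definition is_qpath (x : V * seq E) : bool :=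
  match x.2 with
  | [::] => true
  | e :: s => (src e == x.1) && path (fun a b => tgt a == src b) e s
  end.

Definition qpath := {x : V * seq E | is_qpath x}.

Definition pt (p : qpath) : V := (val p).1.
Definition ph (p : qpath) : V := last (val p).1 (map tgt (val p).2).
Definition plen (p : qpath) : nat := size (val p).2.

Definition vpath (v : V) : qpath := exist _ (v, [::]) isT.

Lemma edge_is_qpath (e : E) : is_qpath (src e, [:: e]).
Proof. by rewrite /is_qpath /= eqxx. Qed.

Definition epath (e : E) : qpath := exist _ (src e, [:: e]) (edge_is_qpath e).

(* left-to-right concatenation; None stands for product 0 *)
Definition pcat (p q : qpath) : option qpath :=
  if ph p == pt q then insub ((val p).1, (val p).2 ++ (val q).2) else None.

Definition qconnected : Prop :=
  (0 < #|V|)%N /\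
  forall u v : V, connect (fun a b => [exists e : E,
     ((src e == a) && (tgt e == b)) || ((src e == b) && (tgt e == a))]) u v.

Variable k : fieldType.

Definition pathalg := {malg k[qpath]}.

Definition pmul (f g : pathalg) : pathalg :=
  \sum_(p <- enum_fset (msupp f)) \sum_(q <- enum_fset (msupp g))
     (f@_p * g@_q) *: (if pcat p q is Some r then << r >> else 0).

Definition pone : pathalg := \sum_(v : V) << vpath v >>.

(* I is contained in R^2, R the ideal generated by the arrows: R^2 is the
   span of the paths of length >= 2 *)
Definition in_R2 (x : pathalg) : Prop := forall p, (plen p < 2)%N -> x@_p = 0.

Definition two_sided_ideal (I : pathalg -> Prop) : Prop :=
  [/\ I 0, (forall x y, I x -> I y -> I (x + y)),
      (forall (a : k) x, I x -> I (a *: x)) &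
      (forall x y, I x -> I (pmul x y) /\ I (pmul y x))].

Variable A : algType k.

(* pi : k Gamma -> A presents A as the quotient algebra k Gamma / I *)
Definition is_quotient_map (I : pathalg -> Prop) (pi : pathalg -> A) : Prop :=
  [/\ (forall (a : k) x y, pi (a *: x + y) = a *: pi x + pi y),
      (forall x y, pi (pmul x y) = pi x * pi y),
      pi pone = 1,
      (forall y, exists x, pi x = y) &
      (forall x, pi x = 0 <-> I x)].

Definition is_diff (pi : pathalg -> A) (D : pathalg -> A) : Prop :=
  (forall (a : k) x y, D (a *: x + y) = a *: D x + D y) /\
  (forall x y, D (pmul x y) = D x * pi y + pi x * D y).

Definition Dinner (pi : pathalg -> A) (m : A) : pathalg -> A :=
  fun x => m * pi x - pi x * m.

(* Qp: set of representing paths of the basis Q = { pi p | p in Qp } *)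
Definition is_path_basis (pi : pathalg -> A) (Qp : pred qpath) : Prop :=
  [/\ {in Qp &, injective (fun p => pi << p >>)},
      (forall v, Qp (vpath v)), (forall e, Qp (epath e)),
      (forall (s : seq qpath) (c : qpath -> k), uniq s -> all Qp s ->
         \sum_(p <- s) c p *: pi << p >> = 0 -> forall p, p \in s -> c p = 0) &
      (forall y : A, exists (s : seq qpath) (c : qpath -> k),
         all Qp s /\ y = \sum_(p <- s) c p *: pi << p >>)].

End Quiver.

Definition is_fun_basis (k : fieldType) (A : lmodType k) (X : Type)
    (Idx : choiceType) (P : pred Idx) (F : Idx -> X -> A) (S : (X -> A) -> Prop)
    : Prop :=
  [/\ (forall i, P i -> S (F i)),
      (forall (s : seq Idx) (c : Idx -> k), uniq s -> all P s ->
         (forall x, \sum_(i <- s) c i *: F i x = 0) ->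
         forall i, i \in s -> c i = 0) &
      (forall D, S D -> exists (s : seq Idx) (c : Idx -> k),
         all P s /\ forall x, D x = \sum_(i <- s) c i *: F i x)].

(** Since every path is a product of arrows, a differential operator D is
    determined by its values on vertices and arrows.  On the complete family of
    orthogonal idempotents [e_v] the Leibniz rule forces
    [D(e_v) = m e_v - e_v m] with [m = \sum_u D(e_u) e_u]; expanding [m] in the
    basis and discarding the loops, which commute with every [e_v], makes [D]
    agree on vertices with a combination of the inner operators [D_s],
    [s \in Q_A].  What is left vanishes on vertices, hence sends each arrow [r]
    to [e_{t(r)} D(r) e_{h(r)}], a combination of basis paths parallel to [r]:
    it is a combination of the [D_{r,s}].  Independence: evaluating a vanishing
    combination at the vertex [e_{h(s)}] isolates the coefficient of [D_s], and
    then evaluating at the arrows isolates those of the [D_{r,s}]. *)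

From HB Require Import structures.
From mathcomp Require Import all_boot all_order all_algebra.
From mathcomp Require Import finmap monalg.
Set Implicit Arguments. Unset Strict Implicit. Unset Printing Implicit Defensive.
Import GRing.Theory.
Local Open Scope ring_scope.

Lemma monalgUZ (K : choiceType) (R : ringType) (c : R) (p : K) :
  << c *g p >> = c *: << p >> :> {malg R[K]}.
Proof. by apply/malgP => q; rewrite mcoeffZ !mcoeffU mulr_natr. Qed.

Section LinearMalg.
Variables (K : choiceType) (R : ringType) (M : lmodType R).
Variable f : {malg R[K]} -> M.
Hypothesis f_linear : linear f.
HB.instance Definition _ := GRing.isLinear.Build R {malg R[K]} M *:%R f f_linear.

Lemma linear_malg_eq0 : (forall p : K, f << p >> = 0) -> forall x, f x = 0.
Proof.
move=> fU0 x; rewrite (monalgE x) linear_sum big1 // => p _.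
by rewrite monalgUZ linearZ /= fU0 scaler0.
Qed.

End LinearMalg.

Section Span.
Variables (K : fieldType) (M : lmodType K) (X : Type) (Idx : choiceType).
Variables (P : pred Idx) (F : Idx -> X -> M).

Definition in_span (f : X -> M) : Prop := exists l : seq (Idx * K),
  all (P \o fst) l /\ forall x, f x = \sum_(ia <- l) ia.2 *: F ia.1 x.

Lemma in_span_ext f g : in_span f -> f =1 g -> in_span g.
Proof. by move=> [l [Pl fl]] fg; exists l; split => // x; rewrite -fg. Qed.

Lemma in_spanD f g : in_span f -> in_span g -> in_span (f \+ g).
Proof.
move=> [l [Pl fl]] [l' [Pl' gl']]; exists (l ++ l').
by split=> [|x]; rewrite ?all_cat ?Pl ?Pl' // big_cat /= fl gl'.
Qed.

Lemma in_span_sum (I : Type) (s : seq I) (G : I -> X -> M) :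
  (forall i, in_span (G i)) -> in_span (fun x => \sum_(i <- s) G i x).
Proof.
move=> G_span; elim: s => [|i s IH].
  by exists [::]; split => // x; rewrite !big_nil.
apply: in_span_ext (in_spanD (G_span i) IH) _ => x.
by rewrite big_cons.
Qed.

Lemma sum_regroup (G : Idx -> M) (l : seq (Idx * K)) :
  \sum_(ia <- l) ia.2 *: G ia.1 =
  \sum_(i <- undup (map fst l)) (\sum_(ia <- l | ia.1 == i) ia.2) *: G i.
Proof.
under [RHS]eq_bigr => i _ do rewrite scaler_suml big_mkcond.
rewrite exchange_big /=; apply: eq_big_seq => ia ia_l.
rewrite (bigD1_seq ia.1) ?mem_undup ?map_f ?undup_uniq //= eqxx big1 ?addr0 //.
by move=> i; rewrite eq_sym => /negbTE ->.
Qed.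

Lemma in_span_combination f : in_span f -> exists (s : seq Idx) (c : Idx -> K),
  all P s /\ forall x, f x = \sum_(i <- s) c i *: F i x.
Proof.
move=> [l [Pl fl]]; exists (undup (map fst l)).
exists (fun i => \sum_(ia <- l | ia.1 == i) ia.2); split.
  by rewrite all_undup all_map.
by move=> x; rewrite fl (sum_regroup (F^~ x)).
Qed.

End Span.

Lemma is_fun_basis_eq (K : fieldType) (M : lmodType K) (X : Type) (Idx : choiceType)
    (P : pred Idx) (F G : Idx -> X -> M) (S : (X -> M) -> Prop) :
  (forall i, F i = G i) -> is_fun_basis P F S -> is_fun_basis P G S.
Proof.
move=> FG [F_S F_free F_span]; split=> [i|s c s_uniq Ps G0|D /F_span [s [c [Ps DF]]]].
- by rewrite -FG; apply: F_S.
- by apply: F_free => // x; apply: etrans (G0 x); apply: eq_bigr => i _; rewrite FG.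
- by exists s, c; split=> // x; rewrite DF; apply: eq_bigr => i _; rewrite FG.
Qed.

Section OrthogonalIdempotents.
Variables (R : ringType) (V : finType) (e d : V -> R).
Hypothesis e_sum : \sum_v e v = 1.
Hypothesis e_mul : forall u v, e u * e v = e u *+ (u == v).
Hypothesis d_Leibniz : forall u v, d u * e v + e u * d v = d u *+ (u == v).

Lemma idempotent_derivation_inner (m := \sum_u d u * e u) v :
  d v = m * e v - e v * m.
Proof.
have m_e : m * e v = d v * e v.
  rewrite mulr_suml (bigD1 v) //= -mulrA e_mul eqxx big1 ?addr0 // => u /negbTE uv.
  by rewrite -mulrA e_mul uv mulr0n mulr0.
have e_d u : e v * d u = d v *+ (v == u) - d v * e u.
  by rewrite -(d_Leibniz v u) addrAC subrr add0r.
have e_m : e v * m = d v * e v - d v.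
  rewrite mulr_sumr.
  under eq_bigr => u _ do rewrite mulrA e_d mulrBl -mulrA e_mul eqxx mulrnAl.
  rewrite sumrB -mulr_sumr e_sum mulr1; congr (_ - _).
  rewrite (bigD1 v) //= eqxx big1 ?addr0 // => u /negbTE uv.
  by rewrite eq_sym uv.
by rewrite m_e e_m opprB addrC subrK.
Qed.

End OrthogonalIdempotents.

Section PathAlgebra.
Variables (k : fieldType) (V E : finType) (src tgt : E -> V).
Local Notation PA := (pathalg src tgt k).
Local Notation QP := (qpath src tgt).
Local Notation vpath := (vpath src tgt).
Local Notation epath := (epath src tgt).

(* Locked: unifying [<< p >>] with [<< q >>] for distinct [p], [q] unfolds the
   underlying finitely supported functions and does not terminate in practice. *)
Definition pathU : QP -> PA := locked (fun p => << p >>).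

Lemma pathUE (p : QP) : pathU p = << p >>.
Proof. by rewrite /pathU -lock. Qed.

Lemma pmul_msupp (f g : PA) (sf sg : {fset QP}) :
  msupp f = sf -> msupp g = sg ->
  pmul f g = \sum_(p <- sf) \sum_(q <- sg)
     (f@_p * g@_q) *: (if pcat p q is Some r then << r >> else 0).
Proof. by move=> <- <-. Qed.

Lemma pmulUU (p q : QP) :
  pmul (pathU p) (pathU q) = if pcat p q is Some r then pathU r else 0.
Proof.
have suppU p' : msupp (<< p' >> : PA) = [fset p']%fset.
  by move: (msuppU p' (1 : k)); rewrite oner_eq0.
rewrite !pathUE (pmul_msupp (suppU p) (suppU q)) !big_seq_fset1.
rewrite !mcoeffUU mulr1 scale1r.
by case: pcat => // r; rewrite pathUE.
Qed.

Lemma pcat_vpathl (u : V) (p : QP) :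
  pcat (vpath u) p = if pt p == u then Some p else None.
Proof.
rewrite /pcat /ph /= eq_sym; case: eqP => // <-.
by rewrite /pt -surjective_pairing valK.
Qed.

Lemma pcat_vpathr (p : QP) (w : V) :
  pcat p (vpath w) = if ph p == w then Some p else None.
Proof.
by rewrite /pcat /pt /=; case: eqP => // _; rewrite cats0 -surjective_pairing valK.
Qed.

Lemma is_qpath_behead (v : V) (e : E) (l : seq E) :
  is_qpath src tgt (v, e :: l) -> is_qpath src tgt (tgt e, l).
Proof.
rewrite /is_qpath /= => /andP [_]; case: l => //= f l /andP [h1 h2].
by rewrite eq_sym h1 h2.
Qed.

Lemma pathU_cons (v : V) (e : E) (l : seq E) (pP : is_qpath src tgt (v, e :: l)) :
  pathU (exist _ (v, e :: l) pP) =
  pmul (pathU (epath e)) (pathU (exist _ (tgt e, l) (is_qpath_behead pP))).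
Proof.
rewrite pmulUU /pcat /ph /pt /= eqxx.
by case/andP: (pP) => /eqP -> _; rewrite (valK (exist _ (v, e :: l) pP)).
Qed.

Definition parallel (r : E) (p : QP) : bool := (src r == pt p) && (tgt r == ph p).

Variables (A : algType k) (pi : PA -> A).

Lemma is_diffB (D1 D2 : PA -> A) :
  is_diff pi D1 -> is_diff pi D2 -> is_diff pi (D1 \- D2).
Proof.
move=> [L1 M1] [L2 M2]; split=> [a x y|x y] /=.
  by rewrite L1 L2 scalerBr addrACA opprD.
by rewrite M1 M2 mulrBl mulrBr addrACA opprD.
Qed.

Lemma is_diffZ (c : k) (D : PA -> A) : is_diff pi D -> is_diff pi (c \*: D).
Proof.
move=> [L M]; split=> [a x y|x y] /=.
  by rewrite L scalerDr !scalerA mulrC.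
by rewrite M scalerDr scalerAl scalerAr.
Qed.

Lemma is_diff_sum (I : eqType) (s : seq I) (Ds : I -> PA -> A) :
  (forall i, i \in s -> is_diff pi (Ds i)) ->
  is_diff pi (fun x => \sum_(i <- s) Ds i x).
Proof.
move=> Ds_diff; split=> [a x y|x y].
  rewrite scaler_sumr -big_split /=; apply: eq_big_seq => i /Ds_diff [L _].
  exact: L.
rewrite mulr_suml mulr_sumr -big_split /=; apply: eq_big_seq => i /Ds_diff [_ M].
exact: M.
Qed.

Lemma Dinner_sum (I : Type) (s : seq I) (c : I -> k) (m : I -> A) (x : PA) :
  Dinner pi (\sum_(i <- s) c i *: m i) x = \sum_(i <- s) c i *: Dinner pi (m i) x.
Proof.
rewrite /Dinner mulr_suml mulr_sumr -sumrB; apply: eq_bigr => i _.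
by rewrite -scalerAl -scalerAr scalerBr.
Qed.

Section QuotientMap.
Hypothesis pi_linear : linear pi.
Hypothesis pi_mul : forall x y, pi (pmul x y) = pi x * pi y.
Hypothesis pi_one : pi (pone src tgt k) = 1.
HB.instance Definition _ := GRing.isLinear.Build k PA A *:%R pi pi_linear.

Lemma pi_vpathl (u : V) (p : QP) :
  pi (pathU (vpath u)) * pi (pathU p) = pi (pathU p) *+ (pt p == u).
Proof. by rewrite -pi_mul pmulUU pcat_vpathl; case: eqP; rewrite ?linear0. Qed.

Lemma pi_vpathr (p : QP) (w : V) :
  pi (pathU p) * pi (pathU (vpath w)) = pi (pathU p) *+ (ph p == w).
Proof. by rewrite -pi_mul pmulUU pcat_vpathr; case: eqP; rewrite ?linear0. Qed.

Lemma pi_vpath_sandwich (r : E) (p : QP) :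
  pi (pathU (vpath (src r))) * pi (pathU p) * pi (pathU (vpath (tgt r))) =
  pi (pathU p) *+ parallel r p.
Proof.
rewrite pi_vpathl mulrnAl pi_vpathr -mulrnA mulnb andbC.
by rewrite /parallel (eq_sym (pt p)) (eq_sym (ph p)).
Qed.

Lemma sum_pi_vpath : \sum_v pi (pathU (vpath v)) = 1.
Proof.
rewrite -pi_one /pone linear_sum; apply: eq_bigr => v _.
by rewrite pathUE.
Qed.

Lemma is_diff_Dinner (m : A) : is_diff pi (Dinner pi m).
Proof.
split=> [a x y|x y]; rewrite /Dinner.
  by rewrite linearP mulrDr mulrDl -scalerAr -scalerAl scalerBr opprD addrACA.
by rewrite pi_mul mulrBl mulrBr !mulrA addrA subrK.
Qed.

Lemma Dinner_vpath (q : QP) (v : V) :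
  Dinner pi (pi (pathU q)) (pathU (vpath v)) =
  pi (pathU q) *+ (ph q == v) - pi (pathU q) *+ (pt q == v).
Proof. by rewrite /Dinner pi_vpathr pi_vpathl. Qed.

Section Derivation.
Variable D : PA -> A.
Hypothesis D_diff : is_diff pi D.
HB.instance Definition _ := GRing.isLinear.Build k PA A *:%R D D_diff.1.

Lemma is_diff_eq0 :
  (forall v, D (pathU (vpath v)) = 0) -> (forall e, D (pathU (epath e)) = 0) ->
  forall x, D x = 0.
Proof.
move=> Dv De; apply: (linear_malg_eq0 D_diff.1) => p; rewrite -pathUE.
case: p => [[v l] pP]; elim: l v pP => [|e l IH] v pP.
  by have -> : exist _ (v, [::]) pP = vpath v by apply: val_inj.
by rewrite (pathU_cons pP) D_diff.2 De IH mul0r mulr0 addr0.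
Qed.

Lemma diff_vpath_Dinner : exists m, forall v,
  D (pathU (vpath v)) = Dinner pi m (pathU (vpath v)).
Proof.
pose e v := pi (pathU (vpath v)); pose d v := D (pathU (vpath v)).
have e_mul u v : e u * e v = e u *+ (u == v).
  by rewrite /e pi_vpathr.
have d_Leibniz u v : d u * e v + e u * d v = d u *+ (u == v).
  rewrite /d /e -D_diff.2 pmulUU pcat_vpathl /pt /= eq_sym.
  by case: eqP => [->|_]; rewrite ?linear0 ?mulr1n ?mulr0n.
by eexists => v; apply: (idempotent_derivation_inner sum_pi_vpath e_mul d_Leibniz).
Qed.

Lemma diff_epath_sandwich (r : E) : (forall v, D (pathU (vpath v)) = 0) ->
  D (pathU (epath r)) =
  pi (pathU (vpath (src r))) * D (pathU (epath r)) * pi (pathU (vpath (tgt r))).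
Proof.
move=> Dv.
have vr : pmul (pathU (vpath (src r))) (pathU (epath r)) = pathU (epath r).
  by rewrite pmulUU pcat_vpathl /pt /= eqxx.
have rv : pmul (pathU (epath r)) (pathU (vpath (tgt r))) = pathU (epath r).
  by rewrite pmulUU pcat_vpathr /ph /= eqxx.
rewrite -{1}vr D_diff.2 Dv mul0r add0r.
by rewrite -{1}rv D_diff.2 Dv mulr0 addr0 mulrA.
Qed.

End Derivation.

Section DiffBasis.
Variables (Qp : pred QP) (Drs : E -> QP -> PA -> A).
Hypothesis basis_free : forall (s : seq QP) (c : QP -> k), uniq s -> all Qp s ->
  \sum_(p <- s) c p *: pi (pathU p) = 0 -> forall p, p \in s -> c p = 0.
Hypothesis basis_span : forall y : A, exists (s : seq QP) (c : QP -> k),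
  all Qp s /\ y = \sum_(p <- s) c p *: pi (pathU p).
Hypothesis Drs_spec : forall r s, Qp s -> parallel r s ->
  [/\ is_diff pi (Drs r s), Drs r s (pathU (epath r)) = pi (pathU s),
      (forall e, e != r -> Drs r s (pathU (epath e)) = 0) &
      (forall v, Drs r s (pathU (vpath v)) = 0)].

Definition basis_idx (i : QP + E * QP) : bool :=
  match i with
  | inl s => Qp s && (pt s != ph s)
  | inr (r, s) => Qp s && parallel r s
  end.

Definition basis_op (i : QP + E * QP) : PA -> A :=
  match i with
  | inl s => Dinner pi (pi (pathU s))
  | inr (r, s) => Drs r s
  end.

Lemma Drs_basis r s : basis_idx (inr (r, s)) ->
  [/\ is_diff pi (Drs r s), Drs r s (pathU (epath r)) = pi (pathU s),
      (forall e, e != r -> Drs r s (pathU (epath e)) = 0) &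
      (forall v, Drs r s (pathU (vpath v)) = 0)].
Proof. by case/andP; apply: Drs_spec. Qed.

Lemma basis_op_diff i : basis_idx i -> is_diff pi (basis_op i).
Proof. by case: i => [s _|[r s] /Drs_basis []] //; exact: is_diff_Dinner. Qed.

Lemma basis_coef_eq0 (J : eqType) (h : J -> option QP) (g : QP -> J)
    (s : seq J) (c : QP -> k) :
  ocancel h g -> uniq s -> (forall j p, j \in s -> h j = Some p -> Qp p) ->
  \sum_(j <- s) oapp (fun p => c p *: pi (pathU p)) 0 (h j) = 0 ->
  forall j p, j \in s -> h j = Some p -> c p = 0.
Proof.
move=> hK s_uniq s_Qp; rewrite -big_pmap => /basis_free c0 j p js jp.
apply: c0; first exact: pmap_uniq s_uniq.
  by apply/allP => q; rewrite mem_pmap => /mapP [j' j's /esym]; apply: s_Qp.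
by rewrite mem_pmap; apply/mapP; exists j.
Qed.

Lemma basis_op_free (s : seq (QP + E * QP)) (c : QP + E * QP -> k) :
  uniq s -> all basis_idx s ->
  (forall x, \sum_(i <- s) c i *: basis_op i x = 0) -> forall i, i \in s -> c i = 0.
Proof.
move=> s_uniq s_idx sum0.
have Rspec r p : inr (r, p) \in s -> _ := fun rps => Drs_basis (allP s_idx _ rps).
pose getl (i : QP + E * QP) : option QP := if i is inl q then Some q else None.
have getlK : ocancel getl inl by case.
have inl_eq0 q : inl q \in s -> c (inl q) = 0.
  move=> qs; have /andP [_ loop_q] := allP s_idx _ qs.
  pose cv p := c (inl p) *+ (ph p == ph q) - c (inl p) *+ (pt p == ph q).
  have := basis_coef_eq0 (c := cv) getlK s_uniq _ _ qs (erefl (getl (inl q))).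
  rewrite /cv eqxx (negbTE loop_q) subr0; apply=> [[p|//] j js [<-]|].
    by have /andP [] := allP s_idx _ js.
  apply: etrans (sum0 (pathU (vpath (ph q)))); apply: eq_big_seq => -[p|[r p]] js /=.
    by rewrite Dinner_vpath scalerBr scalerBl -!scalerMnl -!scalerMnr.
  by have [_ _ _ ->] := Rspec r p js; rewrite scaler0.
move=> [q|[r p]] rps; first exact: inl_eq0.
pose getr (i : QP + E * QP) : option QP :=
  if i is inr (r', q) then if r' == r then Some q else None else None.
have getrK : ocancel getr (fun q => inr (r, q)).
  by case=> [//|[r' q]] /=; case: eqP => // ->.
have := basis_coef_eq0 (c := fun q => c (inr (r, q))) getrK s_uniq _ _ rps.
rewrite /= eqxx; apply=> // [[//|[r' q]] q' js /=|].
  by case: eqP => // _ [<-]; have /andP [] := allP s_idx _ js.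
apply: etrans (sum0 (pathU (epath r))); apply: eq_big_seq => -[q|[r' q]] js /=.
  by rewrite inl_eq0 ?scale0r.
have [_ Drq Dre _] := Rspec r' q js.
case: eqP => [r'r|/eqP r'r]; first by subst r'; rewrite Drq.
by rewrite Dre ?scaler0 // eq_sym.
Qed.

Local Notation spanned := (in_span basis_idx basis_op).

Lemma diff_arrow_part (D : PA -> A) (r : E) : is_diff pi D ->
  (forall v, D (pathU (vpath v)) = 0) ->
  exists G : PA -> A, [/\ spanned G, is_diff pi G,
    G (pathU (epath r)) = D (pathU (epath r)),
    forall e, e != r -> G (pathU (epath e)) = 0 &
    forall v, G (pathU (vpath v)) = 0].
Proof.
move=> D_diff Dv.
have [s [c [Qs Dr]]] := basis_span (D (pathU (epath r))).
pose sr := [seq p <- s | parallel r p].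
have sr_idx p : p \in sr -> basis_idx (inr (r, p)).
  by rewrite mem_filter => /andP [rp ps]; rewrite /= (allP Qs _ ps).
have Rspec p : p \in sr -> _ := fun ps => Drs_basis (sr_idx p ps).
exists (fun x => \sum_(p <- sr) c p *: Drs r p x); split.
- exists [seq (inr (r, p), c p) | p <- sr]; split; last by move=> x; rewrite big_map.
  by apply/allP => _ /mapP [p ps ->]; apply: sr_idx.
- by apply: is_diff_sum => p /Rspec [p_diff _ _ _]; apply: is_diffZ.
- rewrite (diff_epath_sandwich D_diff r Dv) Dr mulr_sumr mulr_suml big_filter big_mkcond.
  apply: eq_big_seq => p ps; rewrite -scalerAr -scalerAl pi_vpath_sandwich -scalerMnr mulrb.
  by case: ifP => // rp; have [_ -> _ _] := Drs_spec (allP Qs _ ps) rp.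
- move=> e er; rewrite big1_seq // => p /andP [_ /Rspec [_ _ Dre _]].
  by rewrite Dre ?scaler0.
- move=> v; rewrite big1_seq // => p /andP [_ /Rspec [_ _ _ ->]].
  by rewrite scaler0.
Qed.

Lemma diff_vertex_free_in_span (D : PA -> A) : is_diff pi D ->
  (forall v, D (pathU (vpath v)) = 0) -> spanned D.
Proof.
move=> D_diff Dv.
have [G G_spec] := fin_all_exists (fun r => diff_arrow_part r D_diff Dv).
have G_span r : spanned (G r) by have [] := G_spec r.
have G_diff r : is_diff pi (G r) by have [] := G_spec r.
have D_eq : forall x, D x - \sum_r G r x = 0.
  apply: is_diff_eq0 => [|v|e] /=.
  - by apply: (is_diffB D_diff); apply: is_diff_sum.
  - by rewrite Dv big1 ?subr0 // => r _; have [_ _ _ _ ->] := G_spec r.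
  rewrite (bigD1 e) //= big1 ?addr0 => [|r /negbTE re].
    by have [_ _ -> _ _] := G_spec e; rewrite subrr.
  by have [_ _ _ Gre _] := G_spec r; rewrite Gre // eq_sym re.
apply: in_span_ext (in_span_sum (index_enum E) G_span) _ => x.
by apply/esym/eqP; rewrite -subr_eq0 D_eq.
Qed.

Lemma diff_in_span (D : PA -> A) : is_diff pi D -> spanned D.
Proof.
move=> D_diff; have [m Dm] := diff_vpath_Dinner D_diff.
have [s [c [Qs m_def]]] := basis_span m.
pose sA := [seq p <- s | pt p != ph p].
pose mA := \sum_(p <- sA) c p *: pi (pathU p).
have DmA v : D (pathU (vpath v)) = Dinner pi mA (pathU (vpath v)).
  rewrite Dm m_def !Dinner_sum big_filter [RHS]big_mkcond; apply: eq_bigr => p _.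
  rewrite Dinner_vpath; case: ifPn => // /negPn/eqP ->.
  by rewrite subrr scaler0.
have mA_span : spanned (Dinner pi mA).
  exists [seq (inl p, c p) | p <- sA]; split.
    apply/allP => _ /mapP [p + ->]; rewrite mem_filter => /andP [loop ps].
    by rewrite /= loop (allP Qs).
  by move=> x; rewrite Dinner_sum big_map.
have D1_span : spanned (D \- Dinner pi mA).
  apply: diff_vertex_free_in_span => [|v /=]; last by rewrite DmA subrr.
  exact/is_diffB/is_diff_Dinner.
by apply: in_span_ext (in_spanD mA_span D1_span) _ => x /=; rewrite addrC subrK.
Qed.

Lemma diff_basis : is_fun_basis basis_idx basis_op (is_diff pi).
Proof.
split; [exact: basis_op_diff | exact: basis_op_free |].
by move=> D /diff_in_span; apply: in_span_combination.
Qed.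

End DiffBasis.
End QuotientMap.
End PathAlgebra.

Arguments pathU {k V E src tgt}.

Theorem theorem2p7 (k : fieldType) (V E : finType) (src tgt : E -> V)
  (A : algType k) (I : pathalg src tgt k -> Prop)
  (pi : pathalg src tgt k -> A) (Qp : pred (qpath src tgt))
  (Drs : E -> qpath src tgt -> pathalg src tgt k -> A) :
  qconnected src tgt ->
  two_sided_ideal I ->
  (forall x, I x -> in_R2 x) ->
  is_quotient_map I pi ->
  is_path_basis pi Qp ->
  (forall (r : E) (s : qpath src tgt), Qp s ->
     src r = pt s -> tgt r = ph s ->
     [/\ is_diff pi (Drs r s),
         Drs r s << epath src tgt r >> = pi << s >>,
         (forall e, e != r -> Drs r s << epath src tgt e >> = 0) &
         (forall v, Drs r s << vpath src tgt v >> = 0)]) ->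
  is_fun_basis
    (fun i : qpath src tgt + (E * qpath src tgt) =>
       match i with
       | inl s => Qp s && (pt s != ph s)
       | inr (r, s) => [&& Qp s, src r == pt s & tgt r == ph s]
       end)
    (fun i => match i with
       | inl s => Dinner pi (pi << s >>)
       | inr (r, s) => Drs r s
       end)
    (is_diff pi).
Proof.
(* Connectedness and [I \subseteq R^2] are only needed for the existence of
   the [D_{r,s}], which is assumed here. *)
move=> _ _ _ [pi_linear pi_mul pi_one _ _] [_ _ _ basis_free basis_span] Drs_spec.
have free s c : uniq s -> all Qp s -> \sum_(p <- s) c p *: pi (pathU p) = 0 ->
    forall p, p \in s -> c p = 0.
  by move=> s_uniq s_Qp; under eq_bigr do rewrite pathUE; apply: basis_free.
have span y : exists s c, all Qp s /\ y = \sum_(p <- s) c p *: pi (pathU p).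
  have [s [c [s_Qp ->]]] := basis_span y; exists s, c; split=> //.
  by under [RHS]eq_bigr do rewrite pathUE.
have spec r s : Qp s -> parallel r s -> [/\ is_diff pi (Drs r s),
    Drs r s (pathU (epath src tgt r)) = pi (pathU s),
    forall e, e != r -> Drs r s (pathU (epath src tgt e)) = 0 &
    forall v, Drs r s (pathU (vpath src tgt v)) = 0].
  move=> Qs /andP [/eqP rs /eqP sr].
  have [Dd Dr De Dv] := Drs_spec r s Qs rs sr.
  by split=> // [|e|v]; rewrite !pathUE; auto.
apply: is_fun_basis_eq (diff_basis pi_linear pi_mul pi_one free span spec).
by case=> [s|[r s]] //=; rewrite pathUE.
Qed.
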